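(* For all nonnegative integers $n$ and $k$, $$W_{m,r}[n,k]_q=\frac{1}{[k]_{q^m}!\,[m]_q^{k}}\sum_{j=0}^{k}(-1)^{k-j}\,q^{m\binom{k-j}{2}}\begin{bmatrix}k\\ j\end{bmatrix}_{q^m}[jm+r]_q^{\,n}.$$
   Context: Fix a real number $q>0$ with $q\neq 1$, a positive integer $m$ and a complex number $r$. For complex $x$ put $q^x=e^{x\ln q}$ and $[x]_q=\frac{1-q^x}{1-q}$. For $p>0$, $p\ne 1$ and integers $0\le j\le k$: $[i]_p=\frac{1-p^i}{1-p}$, $[k]_p!=\prod_{i=1}^{k}[i]_p$ (with $[0]_p!=1$), and $\begin{bmatrix}k\\ j\end{bmatrix}_p=\frac{[k]_p!}{[j]_p!\,[k-j]_p!}$. The numbers $W_{m,r}[n,k]_q$ (a $q$-analogue of the $r$-Whitney numbers of the second kind), for integers $n,k$, are defined by $W_{m,r}[0,0]_q=1$, $W_{m,r}[n,k]_q=0$ whenever $n<k$ or $n<0$ or $k<0$, and, for $n\ge 1$ and $0\le k\le n$, $$W_{m,r}[n,k]_q=q^{m(k-1)+r}\,W_{m,r}[n-1,k-1]_q+[mk+r]_q\,W_{m,r}[n-1,k]_q .$$ *)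

From Stdlib Require Import Reals Lra Lia List.
Open Scope R_scope.

Definition Cplx : Type := (R * R)%type.
Definition RtoC (x : R) : Cplx := (x, 0).
Definition C0 : Cplx := (0, 0).
Definition C1 : Cplx := (1, 0).
Definition Cadd (z w : Cplx) : Cplx := (fst z + fst w, snd z + snd w).
Definition Copp (z : Cplx) : Cplx := (- fst z, - snd z).
Definition Csub (z w : Cplx) : Cplx := Cadd z (Copp w).
Definition Cmul (z w : Cplx) : Cplx :=
  (fst z * fst w - snd z * snd w, fst z * snd w + snd z * fst w).
Definition Cinv (z : Cplx) : Cplx :=
  let d := fst z * fst z + snd z * snd z in (fst z / d, - snd z / d).
Definition Cdiv (z w : Cplx) : Cplx := Cmul z (Cinv w).
Definition Cexp (z : Cplx) : Cplx := (exp (fst z) * cos (snd z), exp (fst z) * sin (snd z)).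
Fixpoint Cpow (z : Cplx) (n : nat) : Cplx :=
  match n with O => C1 | S n' => Cmul z (Cpow z n') end.
Definition Csum_upto (k : nat) (f : nat -> Cplx) : Cplx :=
  fold_right Cadd C0 (map f (seq 0 (S k))).

Definition qpow (q : R) (x : Cplx) : Cplx := Cexp (Cmul (RtoC (ln q)) x).
Definition qnumC (q : R) (x : Cplx) : Cplx :=
  Cdiv (Csub C1 (qpow q x)) (RtoC (1 - q)).

Definition qint (p : R) (i : nat) : R := (1 - p ^ i) / (1 - p).
Fixpoint qfact (p : R) (k : nat) : R :=
  match k with O => 1 | S k' => qfact p k' * qint p (S k') end.
Definition qbinom (p : R) (k j : nat) : R :=
  qfact p k / (qfact p j * qfact p (k - j)).

Fixpoint binom (n k : nat) : nat :=
  match n, k with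
  | _, O => 1%nat
  | O, S _ => 0%nat
  | S n', S k' => (binom n' k' + binom n' (S k'))%nat
  end.

Fixpoint W (q : R) (m : nat) (r : Cplx) (n k : nat) : Cplx :=
  if Nat.ltb n k then C0 else
  match n with
  | O => C1   (* here k = 0 *)
  | S n' =>
    match k with
    | O => Cmul (qnumC q r) (W q m r n' O)
           (* the term with W[n-1,-1] vanishes *)
    | S k' =>
      Cadd (Cmul (qpow q (Cadd (RtoC (INR (m * k'))) r)) (W q m r n' k'))
           (Cmul (qnumC q (Cadd (RtoC (INR (m * k))) r)) (W q m r n' k))
    end
  end.

(* Write p = q^m, mu = [m]_q and x_j = [jm + r]_q.  The right-hand side of the
   theorem is  G(n,k) = sum_{j<=k} c_{k,j} x_j^n  with the real coefficients
     c_{k,j} = (-1)^{k-j} p^{C(k-j,2)} [k choose j]_p / ([k]_p! mu^k).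
   Since W is determined by its recurrence and initial values, it suffices to
   show that G satisfies them too.  Two facts about the coefficients do this:
   - sum_{j<=k} c_{k,j} = 0 for k >= 1, because the alternating sum
     sum_j (-1)^{k-j} p^{C(k-j,2)} [k choose j]_p telescopes by q-Pascal;
     this gives G(0,k) = 0 for k >= 1;
   - c_{k+1,j} (x_j - x_{k+1}) = q^{mk+r} c_{k,j} for j <= k, a consequence of
     [k+1 choose j]_p = [k+1]_p/[k+1-j]_p [k choose j]_p and
     x_j - x_{k+1} = q^r (p^{k+1} - p^j)/(1-q); this gives the main recurrence. *)

From Pilot Require Import Defs.
From Stdlib Require Import Reals List Lra Lia.
(* Re-import Defs so that its [C1] shadows the [C1] of Stdlib's Reals. *)
Import Defs.
Open Scope R_scope.

Lemma Cplx_ring : ring_theory C0 C1 Cadd Cmul Csub Copp (@eq Cplx).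
Proof.
  split; intros; repeat match goal with z : Cplx |- _ => destruct z end;
    unfold Csub, C0, C1, Cadd, Cmul, Copp; simpl; f_equal; ring.
Qed.
Add Ring Cplx_ring : Cplx_ring.

Lemma RtoC_add (a b : R) : RtoC (a + b) = Cadd (RtoC a) (RtoC b).
Proof. unfold RtoC, Cadd; simpl; f_equal; ring. Qed.

Lemma RtoC_sub (a b : R) : RtoC (a - b) = Csub (RtoC a) (RtoC b).
Proof. unfold RtoC, Csub, Cadd, Copp; simpl; f_equal; ring. Qed.

Lemma RtoC_mul (a b : R) : RtoC (a * b) = Cmul (RtoC a) (RtoC b).
Proof. unfold RtoC, Cmul; simpl; f_equal; ring. Qed.

Lemma fold_right_Cadd (l : list Cplx) (a : Cplx) :
  fold_right Cadd a l = Cadd (fold_right Cadd C0 l) a.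
Proof. induction l as [|x l IH]; simpl; [ring | rewrite IH; ring]. Qed.

Lemma Csum_upto_0 (f : nat -> Cplx) : Csum_upto 0 f = f 0%nat.
Proof. unfold Csum_upto; simpl; ring. Qed.

Lemma Csum_upto_S (k : nat) (f : nat -> Cplx) :
  Csum_upto (S k) f = Cadd (Csum_upto k f) (f (S k)).
Proof.
  unfold Csum_upto. rewrite (seq_S (S k) 0), map_app, fold_right_app.
  simpl. rewrite fold_right_Cadd. ring.
Qed.

Lemma Csum_upto_ext (k : nat) (f g : nat -> Cplx) :
  (forall j, (j <= k)%nat -> f j = g j) -> Csum_upto k f = Csum_upto k g.
Proof.
  induction k as [|k IH]; intros Hfg.
  - rewrite !Csum_upto_0; apply Hfg; lia.
  - rewrite !Csum_upto_S, IH, (Hfg (S k)) by (lia || (intros; apply Hfg; lia)).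
    reflexivity.
Qed.

Lemma Csum_upto_add (k : nat) (f g : nat -> Cplx) :
  Csum_upto k (fun j => Cadd (f j) (g j)) = Cadd (Csum_upto k f) (Csum_upto k g).
Proof.
  induction k as [|k IH]; [rewrite !Csum_upto_0 | rewrite !Csum_upto_S, IH]; ring.
Qed.

Lemma Csum_upto_scal (k : nat) (a : Cplx) (f : nat -> Cplx) :
  Csum_upto k (fun j => Cmul a (f j)) = Cmul a (Csum_upto k f).
Proof.
  induction k as [|k IH]; [rewrite !Csum_upto_0 | rewrite !Csum_upto_S, IH]; ring.
Qed.

Lemma Csum_upto_RtoC (k : nat) (g : nat -> R) :
  Csum_upto k (fun j => RtoC (g j)) = RtoC (sum_f_R0 g k).
Proof.
  induction k as [|k IH]; [apply Csum_upto_0 |].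
  rewrite Csum_upto_S, IH, tech5, RtoC_add; reflexivity.
Qed.

Lemma sum_f_R0_telescope (s : nat -> R) (n : nat) :
  sum_f_R0 (fun j => s j - match j with O => 0 | S i => s i end) n = s n.
Proof. induction n as [|n IH]; simpl; [ring | rewrite IH; ring]. Qed.

Lemma binom_0_r (n : nat) : binom n 0 = 1%nat.
Proof. destruct n; reflexivity. Qed.

Lemma binom_S_2 (d : nat) : binom (S d) 2 = (binom d 2 + d)%nat.
Proof.
  assert (binom_1_r : forall n, binom n 1 = n).
  { induction n as [|n IH]; simpl; [reflexivity | rewrite binom_0_r, IH; lia]. }
  simpl; rewrite binom_1_r; lia.
Qed.

Section QAnalogues.
Variable p : R.
Hypothesis hp : 0 < p.
Hypothesis hp1 : p <> 1.

Lemma pow_neq_1 (n : nat) : (0 < n)%nat -> p ^ n <> 1.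
Proof.
  intros hn. destruct (Rlt_or_le p 1) as [h|h].
  - pose proof (pow_lt_1_compat p n (conj (Rlt_le _ _ hp) h) hn); lra.
  - pose proof (Rlt_pow_R1 p n ltac:(lra) hn); lra.
Qed.

Lemma qint_neq_0 (i : nat) : (0 < i)%nat -> qint p i <> 0.
Proof.
  intros hi. unfold qint. pose proof (pow_neq_1 i hi).
  apply Rmult_integral_contrapositive_currified; [lra | apply Rinv_neq_0_compat; lra].
Qed.

Lemma qfact_neq_0 (k : nat) : qfact p k <> 0.
Proof.
  induction k as [|k IH]; simpl; [lra |].
  apply Rmult_integral_contrapositive_currified; [exact IH | apply qint_neq_0; lia].
Qed.

Lemma qbinom_0_r (n : nat) : qbinom p n 0 = 1.
Proof.
  unfold qbinom. rewrite Nat.sub_0_r. simpl qfact at 2.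
  pose proof (qfact_neq_0 n). field; auto.
Qed.

Lemma qbinom_diag (n : nat) : qbinom p n n = 1.
Proof.
  unfold qbinom. rewrite Nat.sub_diag. simpl qfact at 3.
  pose proof (qfact_neq_0 n). field; auto.
Qed.

Lemma qbinom_pascal (k j : nat) : (j < k)%nat ->
  qbinom p (S k) (S j) = qbinom p k (S j) + p ^ (k - j) * qbinom p k j.
Proof.
  intros hjk. destruct (Nat.le_exists_sub (S j) k hjk) as [d [-> _]].
  unfold qbinom.
  replace (S (d + S j) - S j)%nat with (S d) by lia.
  replace (d + S j - S j)%nat with d by lia.
  replace (d + S j - j)%nat with (S d) by lia.
  change (qfact p (S ?n)) with (qfact p n * qint p (S n)).
  pose proof (qfact_neq_0 (d + S j)); pose proof (qfact_neq_0 j); pose proof (qfact_neq_0 d).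
  pose proof (pow_neq_1 (S j) ltac:(lia)); pose proof (pow_neq_1 (S d) ltac:(lia)).
  unfold qint. replace (S (d + S j)) with (S d + S j)%nat by lia. rewrite pow_add.
  field; repeat split; lra.
Qed.
End QAnalogues.

(** The signed q-binomial [(-1)^(k-j) p^C(k-j,2) [k, j]_p], i.e. the
    coefficient of [x^j] in [prod_(i<k) (x - p^i)]. *)
Definition alt_qbinom (p : R) (k j : nat) : R :=
  (-1) ^ (k - j) * p ^ (binom (k - j) 2) * qbinom p k j.

Section Coefficients.
Variables p mu : R.
Hypothesis hp : 0 < p.
Hypothesis hp1 : p <> 1.

(** For [k >= 1] the signed q-binomials sum to zero (the product above
    vanishes at [x = 1]).  By q-Pascal the sum telescopes against
    [s_j = (-1)^(k+1-j) p^C(k+1-j,2) [k, j]_p]. *)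
Lemma alt_qbinom_sum_0 (k : nat) : sum_f_R0 (alt_qbinom p (S k)) (S k) = 0.
Proof.
  set (s := fun j => if (j <=? k)%nat then
              (-1) ^ (S k - j) * p ^ (binom (S k - j) 2) * qbinom p k j else 0).
  transitivity (sum_f_R0 (fun j => s j - match j with O => 0 | S i => s i end) (S k)).
  2:{ rewrite sum_f_R0_telescope; unfold s.
      replace (S k <=? k)%nat with false by (symmetry; apply Nat.leb_gt; lia); reflexivity. }
  apply sum_eq; intros j hj; unfold alt_qbinom, s.
  destruct j as [|i]; [| destruct (Nat.eq_dec i k) as [->|hik]].
  - replace (0 <=? k)%nat with true by (symmetry; apply Nat.leb_le; lia).
    rewrite !qbinom_0_r by assumption; ring.
  - replace (S k <=? k)%nat with false by (symmetry; apply Nat.leb_gt; lia).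
    replace (k <=? k)%nat with true by (symmetry; apply Nat.leb_le; lia).
    rewrite Nat.sub_diag, !qbinom_diag by assumption.
    replace (S k - k)%nat with 1%nat by lia; simpl; ring.
  - destruct (Nat.le_exists_sub (S i) k ltac:(lia)) as [d [-> _]].
    replace (S i <=? d + S i)%nat with true by (symmetry; apply Nat.leb_le; lia).
    replace (i <=? d + S i)%nat with true by (symmetry; apply Nat.leb_le; lia).
    rewrite qbinom_pascal by (assumption || lia).
    replace (S (d + S i) - S i)%nat with (S d) by lia.
    replace (S (d + S i) - i)%nat with (S (S d)) by lia.
    replace (d + S i - i)%nat with (S d) by lia.
    rewrite !binom_S_2, !pow_add; simpl; ring.
Qed.

(** The coefficients [c_{k,j}] of the explicit formula, with [mu] standing
    for [[m]_q] and [p] for [q^m]. *)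
Definition coef (k j : nat) : R := alt_qbinom p k j / (qfact p k * mu ^ k).

Lemma coef_0_0 : coef 0 0 = 1.
Proof. unfold coef, alt_qbinom, qbinom; simpl; field. Qed.

Lemma coef_sum_0 (k : nat) : sum_f_R0 (coef (S k)) (S k) = 0.
Proof.
  unfold coef. unfold Rdiv at 1.
  rewrite <- (scal_sum (alt_qbinom p (S k))), alt_qbinom_sum_0; ring.
Qed.

Hypothesis hmu : mu <> 0.

Lemma coef_step (k j : nat) : (j <= k)%nat ->
  coef (S k) j * (mu * ((p ^ S k - p ^ j) / (1 - p))) = p ^ k * coef k j.
Proof.
  intros hjk. destruct (Nat.le_exists_sub j k hjk) as [d [-> _]].
  unfold coef, alt_qbinom, qbinom.
  replace (S (d + j) - j)%nat with (S d) by lia.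
  replace (d + j - j)%nat with d by lia.
  rewrite binom_S_2.
  change (qfact p (S ?n)) with (qfact p n * qint p (S n)).
  unfold qint. replace (S (d + j)) with (S d + j)%nat by lia.
  pose proof (qfact_neq_0 p hp hp1 (d + j)); pose proof (qfact_neq_0 p hp hp1 j).
  pose proof (qfact_neq_0 p hp hp1 d).
  pose proof (pow_neq_1 p hp hp1 (S d + j) ltac:(lia)).
  pose proof (pow_neq_1 p hp hp1 (S d) ltac:(lia)).
  pose proof (pow_nonzero mu d hmu); pose proof (pow_nonzero mu j hmu).
  rewrite !pow_add in *; rewrite <- !tech_pow_Rmult in *.
  field; repeat split; lra.
Qed.
End Coefficients.

Section Nodes.
Variables (q : R) (m : nat) (r : Cplx).
Hypothesis hq : 0 < q.
Hypothesis hq1 : q <> 1.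
Hypothesis hm : (0 < m)%nat.

Lemma qpow_shift (a : nat) :
  qpow q (Cadd (RtoC (INR a)) r) = Cmul (RtoC (q ^ a)) (qpow q r).
Proof.
  destruct r as [x y]; unfold qpow, Cexp, Cmul, Cadd, RtoC; simpl.
  rewrite <- (Rpower_pow a q hq); unfold Rpower.
  replace (ln q * (INR a + x) - 0 * (0 + y)) with (INR a * ln q + (ln q * x - 0 * y)) by ring.
  replace (ln q * (0 + y) + 0 * (INR a + x)) with (ln q * y + 0 * x) by ring.
  rewrite exp_plus; f_equal; ring.
Qed.

Lemma qnumC_shift (a : nat) :
  qnumC q (Cadd (RtoC (INR a)) r) =
  Cmul (RtoC (1 / (1 - q))) (Csub C1 (Cmul (RtoC (q ^ a)) (qpow q r))).
Proof.
  unfold qnumC; rewrite qpow_shift.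
  destruct (Csub _ _) as [x y]; unfold Cdiv, Cinv, Cmul, RtoC; simpl.
  f_equal; field; lra.
Qed.

Definition qnode (j : nat) : Cplx := qnumC q (Cadd (RtoC (INR (j * m))) r).

Definition wcoef (k j : nat) : R := coef (q ^ m) (qint q m) k j.

(** It reduces to [coef_step] since
    [x_j - x_{k+1} = q^r (q^((k+1)m) - q^(jm))/(1-q)]. *)
Lemma wcoef_step (k j : nat) : (j <= k)%nat ->
  Cmul (RtoC (wcoef (S k) j)) (qnode j) =
  Cadd (Cmul (qpow q (Cadd (RtoC (INR (m * k))) r)) (RtoC (wcoef k j)))
       (Cmul (qnode (S k)) (RtoC (wcoef (S k) j))).
Proof.
  intros hjk. unfold qnode, wcoef. rewrite !qnumC_shift, qpow_shift.
  assert (Hreal : coef (q ^ m) (qint q m) (S k) j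
                    * (1 / (1 - q) * (q ^ (S k * m) - q ^ (j * m)))
                  = q ^ (m * k) * coef (q ^ m) (qint q m) k j).
  { assert (hp : 0 < q ^ m) by (apply pow_lt; lra).
    pose proof (pow_neq_1 q hq hq1 m hm).
    rewrite (pow_mult q m k), <- coef_step by (assumption || apply qint_neq_0; assumption).
    rewrite (Nat.mul_comm (S k) m), (Nat.mul_comm j m), !pow_mult.
    unfold qint; f_equal; field; lra. }
  apply (f_equal RtoC) in Hreal; rewrite !RtoC_mul, RtoC_sub in Hreal.
  set (Q := qpow q r) in *.
  replace (Cmul (Cmul (RtoC (q ^ (m * k))) Q) (RtoC (coef (q ^ m) (qint q m) k j)))
    with (Cmul Q (Cmul (RtoC (q ^ (m * k))) (RtoC (coef (q ^ m) (qint q m) k j)))) by ring.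
  rewrite <- Hreal; ring.
Qed.
End Nodes.

Lemma W_lt (q : R) (m : nat) (r : Cplx) (n k : nat) : (n < k)%nat -> W q m r n k = C0.
Proof.
  intros hnk; destruct n; simpl; replace (Nat.ltb _ k) with true; try reflexivity;
    symmetry; apply Nat.ltb_lt; lia.
Qed.

Lemma W_S_S (q : R) (m : nat) (r : Cplx) (n k : nat) : W q m r (S n) (S k) =
  Cadd (Cmul (qpow q (Cadd (RtoC (INR (m * k))) r)) (W q m r n k))
       (Cmul (qnumC q (Cadd (RtoC (INR (m * S k))) r)) (W q m r n (S k))).
Proof.
  destruct (Nat.ltb_spec n k) as [hnk | hkn].
  - rewrite !W_lt by lia; ring.
  - simpl W at 1; replace (S n <? S k)%nat with false; [reflexivity |].
    symmetry; apply Nat.ltb_ge; lia.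
Qed.

Lemma W_unique (q : R) (m : nat) (r : Cplx) (F : nat -> nat -> Cplx) :
  F 0%nat 0%nat = C1 ->
  (forall k, F 0%nat (S k) = C0) ->
  (forall n, F (S n) 0%nat = Cmul (qnumC q r) (F n 0%nat)) ->
  (forall n k, F (S n) (S k) =
     Cadd (Cmul (qpow q (Cadd (RtoC (INR (m * k))) r)) (F n k))
          (Cmul (qnumC q (Cadd (RtoC (INR (m * S k))) r)) (F n (S k)))) ->
  forall n k, W q m r n k = F n k.
Proof.
  intros F00 F0S FS0 FSS n; induction n as [|n IH]; intros [|k].
  - symmetry; exact F00.
  - rewrite F0S; reflexivity.
  - rewrite FS0, <- IH; reflexivity.
  - rewrite W_S_S, FSS, <- !IH; reflexivity.
Qed.

Section Explicit.
Variables (q : R) (m : nat) (r : Cplx).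
Hypothesis hq : 0 < q.
Hypothesis hq1 : q <> 1.
Hypothesis hm : (0 < m)%nat.

Definition Wexpl (n k : nat) : Cplx :=
  Csum_upto k (fun j => Cmul (RtoC (wcoef q m k j)) (Cpow (qnode q m r j) n)).

Lemma Wexpl_0_0 : Wexpl 0 0 = C1.
Proof.
  unfold Wexpl, wcoef; rewrite Csum_upto_0, coef_0_0; simpl.
  unfold Cmul, RtoC, C1; simpl; f_equal; ring.
Qed.

Lemma Wexpl_0_S (k : nat) : Wexpl 0 (S k) = C0.
Proof.
  unfold Wexpl.
  rewrite (Csum_upto_ext _ _ (fun j => RtoC (wcoef q m (S k) j))) by (intros; simpl; ring).
  unfold wcoef; rewrite Csum_upto_RtoC, coef_sum_0; [reflexivity | |].
  - apply pow_lt; exact hq.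
  - apply pow_neq_1; assumption.
Qed.

Lemma Wexpl_S_0 (n : nat) : Wexpl (S n) 0 = Cmul (qnumC q r) (Wexpl n 0).
Proof.
  assert (Hnode : qnode q m r 0 = qnumC q r).
  { unfold qnode; simpl; f_equal; destruct r; unfold Cadd, RtoC; simpl; f_equal; ring. }
  unfold Wexpl; rewrite !Csum_upto_0, Hnode; simpl; ring.
Qed.

(** Summing [wcoef_step] over [j <= k]; the extra term [j = k+1] of
    [G(n+1,k+1)] is the last term of [x_{k+1} G(n,k+1)]. *)
Lemma Wexpl_S_S (n k : nat) : Wexpl (S n) (S k) =
  Cadd (Cmul (qpow q (Cadd (RtoC (INR (m * k))) r)) (Wexpl n k))
       (Cmul (qnumC q (Cadd (RtoC (INR (m * S k))) r)) (Wexpl n (S k))).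
Proof.
  replace (qnumC q (Cadd (RtoC (INR (m * S k))) r)) with (qnode q m r (S k))
    by (unfold qnode; rewrite Nat.mul_comm; reflexivity).
  unfold Wexpl; rewrite !Csum_upto_S.
  set (qk := qpow q (Cadd (RtoC (INR (m * k))) r)).
  set (x := qnode q m r).
  set (c := wcoef q m).
  rewrite (Csum_upto_ext k (fun j => Cmul (RtoC (c (S k) j)) (Cpow (x j) (S n)))
    (fun j => Cadd (Cmul qk (Cmul (RtoC (c k j)) (Cpow (x j) n)))
                   (Cmul (x (S k)) (Cmul (RtoC (c (S k) j)) (Cpow (x j) n))))).
  - rewrite Csum_upto_add, !Csum_upto_scal; simpl Cpow; ring.
  - intros j hjk; simpl Cpow.
    transitivity (Cmul (Cmul (RtoC (c (S k) j)) (x j)) (Cpow (x j) n)); [ring |].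
    unfold c, x, qk; rewrite wcoef_step by assumption; ring.
Qed.
End Explicit.

Theorem theorem3 (q : R) (m : nat) (r : Cplx)
  (hq : 0 < q) (hq1 : q <> 1) (hm : (0 < m)%nat) (n k : nat) :
  W q m r n k =
  Cmul (RtoC (1 / (qfact (q ^ m) k * (qint q m) ^ k)))
    (Csum_upto k (fun j =>
       Cmul (RtoC ((-1) ^ (k - j) * q ^ (m * binom (k - j) 2)
                   * qbinom (q ^ m) k j))
            (Cpow (qnumC q (Cadd (RtoC (INR (j * m))) r)) n))).
Proof.
  transitivity (Wexpl q m r n k).
  { apply W_unique; intros;
      [apply Wexpl_0_0 | apply Wexpl_0_S | apply Wexpl_S_0 | apply Wexpl_S_S];
      assumption. }
  unfold Wexpl; rewrite <- Csum_upto_scal; apply Csum_upto_ext; intros j _.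
  assert (hp : 0 < q ^ m) by (apply pow_lt; exact hq).
  pose proof (qfact_neq_0 (q ^ m) hp (pow_neq_1 q hq hq1 m hm) k).
  pose proof (pow_nonzero _ k (qint_neq_0 q hq hq1 m hm)).
  unfold wcoef, coef, alt_qbinom, qnode; rewrite (pow_mult q m (binom (k - j) 2)).
  rewrite Cplx_ring.(Rmul_assoc), <- RtoC_mul; do 2 f_equal; field; split; assumption.
Qed.
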